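(* Let $G$ be a graph with a cut-vertex $v$ such that $G-\{v\}$ is the disjoint union $G_1\cup G_2$ of two graphs (with no edges between $G_1$ and $G_2$; $G_1,G_2$ need not be connected) and $v$ has at least two neighbours in $G_1$ and at least two neighbours in $G_2$. Then $G\notin\mathcal{G}^{\rm SSP}$.
   Context: All graphs are finite, simple, undirected. For a graph $G$ on $\{1,\ldots,n\}$, $\mathcal{S}(G)$ is the set of real symmetric $n\times n$ matrices $A=(a_{ij})$ with $a_{ij}\neq0$ iff $\{i,j\}\in E(G)$ for $i\neq j$ (diagonal arbitrary). A real symmetric $A$ has the strong spectral property (SSP) if the only real symmetric $X$ with $A\circ X=0$, $I\circ X=0$, $AX-XA=0$ is $X=0$ ($\circ$ = entrywise product). $\mathcal{G}^{\rm SSP}$ is the set of graphs $G$ such that every matrix in $\mathcal{S}(G)$ has the SSP. *)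

From HB Require Import structures.
From mathcomp Require Import all_boot all_order all_algebra.
From mathcomp Require Import reals.
Set Implicit Arguments. Unset Strict Implicit. Unset Printing Implicit Defensive.
Import Order.TTheory GRing.Theory Num.Theory.
Local Open Scope ring_scope.

Definition simple_graph (n : nat) (e : rel 'I_n) : Prop :=
  symmetric e /\ irreflexive e.

Definition hadamard (R : realType) (n : nat) (A B : 'M[R]_n) : 'M[R]_n :=
  \matrix_(i, j) (A i j * B i j).

Definition in_S (R : realType) (n : nat) (e : rel 'I_n) (A : 'M[R]_n) : Prop :=
  A^T = A /\ (forall i j : 'I_n, i != j -> (A i j != 0) = e i j).

Definition SSP (R : realType) (n : nat) (A : 'M[R]_n) : Prop :=
  forall X : 'M[R]_n, X^T = X -> hadamard A X = 0 -> hadamard 1%:M X = 0 ->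
    A *m X - X *m A = 0 -> X = 0.

Definition G_SSP (R : realType) (n : nat) (e : rel 'I_n) : Prop :=
  forall A : 'M[R]_n, in_S e A -> SSP A.

From mathcomp Require Import all_boot all_algebra.
From mathcomp Require Import reals.
Set Implicit Arguments. Unset Strict Implicit. Unset Printing Implicit Defensive.
Import GRing.Theory Num.Theory.
Local Open Scope ring_scope.

(** Weight the edges of G so that the resulting matrix A in S(G) annihilates
    the indicator vectors 1_{V1} and 1_{V2}: away from v, A is a weighted
    Laplacian of G - v, whose rows sum to zero within each V_k since no edge
    joins V1 and V2; the weights of the edges at v are chosen nonzero and
    summing to zero over the neighbours of v in each V_k, which needs at least
    two such neighbours.  Then X = 1_{V1} 1_{V2}^T + 1_{V2} 1_{V1}^T is a
    nonzero symmetric matrix vanishing on the diagonal and on the edges of G,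
    and it commutes with A because A kills both factors: A fails the SSP. *)

Definition indic (R : pzSemiRingType) (n : nat) (V : {set 'I_n}) : 'cV[R]_n :=
  \col_j (j \in V)%:R.

Lemma mulmx_indic (R : pzSemiRingType) (m n : nat) (M : 'M[R]_(m, n))
    (V : {set 'I_n}) i :
  (M *m indic R V) i 0 = \sum_(j in V) M i j.
Proof.
rewrite mxE [RHS]big_mkcond; apply: eq_bigr => j _; rewrite mxE.
by case: (j \in V); rewrite ?mulr1 ?mulr0.
Qed.

Lemma sym_outer_commute (R : comPzRingType) (n : nat) (A : 'M[R]_n)
    (x y : 'cV[R]_n) :
  A^T = A -> A *m x = 0 -> A *m y = 0 ->
  A *m (x *m y^T + y *m x^T) - (x *m y^T + y *m x^T) *m A = 0.
Proof.
move=> symA Ax Ay.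
have tr_ker z : A *m z = 0 -> z^T *m A = 0.
  by move=> Az; rewrite -symA -trmx_mul Az trmx0.
rewrite mulmxDr mulmxDl !mulmxA Ax Ay -!mulmxA !tr_ker //.
by rewrite !(mul0mx, mulmx0) addr0 subrr.
Qed.

Section SSPFailure.
Variables (R : realType) (n : nat) (A : 'M[R]_n) (V W : {set 'I_n}).
Hypotheses (symA : A^T = A) (disVW : [disjoint V & W]).

Let X := indic R V *m (indic R W)^T + indic R W *m (indic R V)^T.

Let X_entry i j :
  X i j = (i \in V)%:R * (j \in W)%:R + (i \in W)%:R * (j \in V)%:R.
Proof. by rewrite !mxE !big_ord1 !mxE. Qed.

Lemma not_SSP_disjoint_kernel a b : a \in V -> b \in W ->
  (forall i j, i \in V -> j \in W -> A i j = 0) ->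
  A *m indic R V = 0 -> A *m indic R W = 0 -> ~ SSP A.
Proof.
move=> aV bW A0 AV AW sspA.
have : X a b != 0.
  by rewrite X_entry aV bW (disjointFr disVW aV) mulr1 mul0r addr0 oner_eq0.
apply/negP; rewrite negbK (sspA X) ?mxE ?sym_outer_commute //.
- by rewrite raddfD /= !trmx_mul !trmxK addrC.
- have block i j : A i j * ((i \in V)%:R * (j \in W)%:R) = 0.
    case: (boolP (i \in V)) => iV; last by rewrite mul0r mulr0.
    case: (boolP (j \in W)) => jW; last by rewrite !mulr0.
    by rewrite A0 ?mul0r.
  apply/matrixP => i j; rewrite mxE X_entry mxE mulrDr block add0r.
  by rewrite -[in A i j]symA mxE (mulrC (i \in W)%:R) block.
- apply/matrixP => i j; rewrite mxE X_entry !mxE.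
  have [<-|_] := eqVneq i j; last by rewrite mul0r.
  case: (boolP (i \in V)) => iV; last by rewrite !(mul0r, mulr0, addr0).
  by rewrite (disjointFr disVW iV) !(mul0r, mulr0, addr0).
Qed.

End SSPFailure.

Section BalancedWeights.
Variables (R : numDomainType) (T : finType).

Definition balanced (N : {set T}) (a u : T) : R :=
  if u == a then 1 - #|N|%:R else 1.

Lemma balanced_neq0 (N : {set T}) (a u : T) :
  (1 < #|N|)%N -> balanced N a u != 0.
Proof.
move=> N_gt1; rewrite /balanced; case: ifP => _; last exact: oner_neq0.
by rewrite subr_eq0 eq_sym pnatr_eq1 gtn_eqF.
Qed.

Lemma balanced_id (N : {set T}) (a u : T) : u != a -> balanced N a u = 1.
Proof. by rewrite /balanced => /negbTE ->. Qed.

Lemma sum_balanced (N : {set T}) (a : T) :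
  a \in N -> \sum_(u in N) balanced N a u = 0.
Proof.
move=> aN; rewrite (big_setD1 a aN) /= /balanced eqxx.
rewrite (eq_bigr (fun _ => 1)) => [|u /setD1P[/negbTE -> //]].
by rewrite sumr_const (cardsD1 a N) aN natrD opprD addrA subrr add0r addNr.
Qed.

Lemma disjoint_zero_sum_weights (N1 N2 : {set T}) :
  [disjoint N1 & N2] -> (1 < #|N1|)%N -> (1 < #|N2|)%N ->
  exists w : T -> R, [/\ forall u, w u != 0,
    \sum_(u in N1) w u = 0 & \sum_(u in N2) w u = 0].
Proof.
move=> disN N1_gt1 N2_gt1.
have [a1 a1N1] : exists a1, a1 \in N1 by apply/card_gt0P; apply: ltnW.
have [a2 a2N2] : exists a2, a2 \in N2 by apply/card_gt0P; apply: ltnW.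
exists (fun u => balanced N1 a1 u * balanced N2 a2 u); split.
- by move=> u; rewrite mulf_neq0 ?balanced_neq0.
- rewrite -[RHS](sum_balanced a1N1); apply: eq_bigr => u uN1.
  rewrite [balanced N2 a2 u]balanced_id ?mulr1 //.
  by apply: contraTneq uN1 => ->; rewrite (disjointFl disN a2N2).
- rewrite -[RHS](sum_balanced a2N2); apply: eq_bigr => u uN2.
  rewrite [balanced N1 a1 u]balanced_id ?mul1r //.
  by apply: contraTneq uN2 => ->; rewrite (disjointFr disN a1N1).
Qed.

End BalancedWeights.

Section CutVertexMatrix.
Variables (R : realType) (n : nat) (e : rel 'I_n) (v : 'I_n) (w : 'I_n -> R).
Hypothesis e_sym : symmetric e.

Definition weighted_adj : 'M[R]_n := \matrix_(i, j) ((e i j)%:R * (w i * w j)).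

Definition cut_matrix : 'M[R]_n :=
  weighted_adj - diag_mx (\row_i \sum_(k in [set~ v]) weighted_adj i k).

Lemma weighted_adj_nonedge i j : ~~ e i j -> weighted_adj i j = 0.
Proof. by rewrite mxE => /negbTE ->; rewrite mul0r. Qed.

Lemma cut_matrix_offdiag i j : i != j -> cut_matrix i j = weighted_adj i j.
Proof. by move=> ij; rewrite !mxE (negbTE ij) mulr0n subr0. Qed.

Lemma cut_matrix_sym : cut_matrix^T = cut_matrix.
Proof.
rewrite /cut_matrix linearB /= tr_diag_mx; congr (_ - _).
by apply/matrixP => i j; rewrite !mxE e_sym (mulrC (w j)).
Qed.

Lemma cut_matrix_in_S : (forall u, w u != 0) -> in_S e cut_matrix.
Proof.
move=> w_neq0; split=> [|i j ij]; first exact: cut_matrix_sym.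
rewrite cut_matrix_offdiag // mxE.
by case: (e i j); rewrite ?mul0r ?eqxx // mul1r mulf_neq0.
Qed.

Lemma sum_weighted_adj (V : {set 'I_n}) i :
  \sum_(j in V) weighted_adj i j = w i * \sum_(u in [set u in V | e i u]) w u.
Proof.
rewrite big_distrr big_mkcond [RHS]big_mkcond /=; apply: eq_bigr => j _.
by rewrite !inE mxE; case: (j \in V); case: (e i j); rewrite ?mul1r ?mul0r.
Qed.

Lemma cut_matrix_indic_kernel (V W : {set 'I_n}) :
  V :|: W = [set~ v] -> [disjoint V & W] ->
  (forall i j, i \in V -> j \in W -> ~~ e i j) ->
  \sum_(u in [set u in V | e v u]) w u = 0 ->
  cut_matrix *m indic R V = 0.
Proof.
move=> VW_cover VW_dis VW_nonedge sum_w0.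
apply/matrixP => i z; rewrite ord1 [RHS]mxE mulmxBl mul_diag_mx [LHS]mxE.
rewrite mulmx_indic !mxE.
case: (boolP (i \in V)) => iV.
  have sum_cover (F : 'I_n -> R) :
      \sum_(k in [set~ v]) F k = \sum_(k in V) F k + \sum_(k in W) F k.
    by rewrite -bigU //=; apply: eq_bigl => k; rewrite -VW_cover !inE.
  rewrite mulr1 sum_cover [\sum_(k in W) _]big1 ?addr0 ?subrr // => k kW.
  exact/weighted_adj_nonedge/VW_nonedge.
rewrite mulr0 subr0; have [->|iv] := eqVneq i v.
  by rewrite sum_weighted_adj sum_w0 mulr0.
have : i \in V :|: W by rewrite VW_cover !inE.
rewrite inE (negbTE iV) /= => iW.
rewrite big1 // => j jV; apply: weighted_adj_nonedge.
by rewrite e_sym VW_nonedge.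
Qed.

End CutVertexMatrix.

Theorem corollary2p6 (R : realType) (n : nat) (e : rel 'I_n) (v : 'I_n)
    (V1 V2 : {set 'I_n}) :
  simple_graph e ->
  v \notin V1 -> v \notin V2 -> [disjoint V1 & V2] ->
  V1 :|: V2 = [set~ v] ->
  (forall i j, i \in V1 -> j \in V2 -> ~~ e i j) ->
  (2 <= #|[set u in V1 | e v u]|)%N ->
  (2 <= #|[set u in V2 | e v u]|)%N ->
  ~ G_SSP R e.
Proof.
move=> [e_sym _] _ _ V12_dis V12_cover V12_nonedge N1_gt1 N2_gt1 e_SSP.
have N_sub (V : {set 'I_n}) : [set u in V | e v u] \subset V.
  by apply/subsetP => u /setIdP[].
have [w [w_neq0 sum_w1 sum_w2]] := disjoint_zero_sum_weights R
  (disjointWr (N_sub V2) (disjointWl (N_sub V1) V12_dis)) N1_gt1 N2_gt1.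
have [a1 a1N1] : exists a1, a1 \in [set u in V1 | e v u].
  by apply/card_gt0P; apply: ltnW.
have [a2 a2N2] : exists a2, a2 \in [set u in V2 | e v u].
  by apply/card_gt0P; apply: ltnW.
have a1V1 := subsetP (N_sub V1) a1 a1N1.
have a2V2 := subsetP (N_sub V2) a2 a2N2.
have V21_nonedge i j : i \in V2 -> j \in V1 -> ~~ e i j.
  by move=> iV2 jV1; rewrite e_sym V12_nonedge.
apply: (not_SSP_disjoint_kernel (cut_matrix_sym v w e_sym) V12_dis a1V1 a2V2).
- move=> i j iV1 jV2.
  rewrite cut_matrix_offdiag ?weighted_adj_nonedge ?V12_nonedge //.
  by apply: contraTneq jV2 => <-; rewrite (disjointFr V12_dis iV1).
- exact: (cut_matrix_indic_kernel e_sym V12_cover V12_dis V12_nonedge sum_w1).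
- rewrite setUC in V12_cover; rewrite disjoint_sym in V12_dis.
  exact: (cut_matrix_indic_kernel e_sym V12_cover V12_dis V21_nonedge sum_w2).
- exact/e_SSP/cut_matrix_in_S.
Qed.
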